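(* Let $F$ satisfy the standing assumption, let $A\colon X\rightrightarrows X^*$ be monotone, let $T_A=(A+F)^{-1}F$ be its $F$-resolvent, and let $T_{A^{-1}}=(A^{-1}+F^{-1})^{-1}F^{-1}$ be the $F^{-1}$-resolvent of $A^{-1}$. Then $\operatorname{dom}T_{A^{-1}}=F(\operatorname{ran}(A^{-1}+F^{-1}))$, and for every $x^*\in\operatorname{dom}T_{A^{-1}}$ and $y^*\in X^*$, $$y^*=T_{A^{-1}}x^*\iff y^*=F\Big(F^{-1}x^*-T_A\big(F^{-1}\big(y^*+F(F^{-1}x^*-F^{-1}y^* )\big)\big)\Big).$$
   Context: $X$ is a real reflexive Banach space with dual $X^*$ and pairing $\langle\cdot,\cdot\rangle$. Standing assumption: $F\colon X\to X^*$ is single-valued with full domain, maximal monotone, strictly monotone ($\langle x-y,Fx-Fy\rangle>0$ for $x\ne y$), 3*-monotone (for every $(x,x^* )\in X\times X^*$, $\sup_{y\in X}\langle x-y,Fy-x^*\rangle<+\infty$), and surjective (hence bijective, so $F^{-1}\colon X^*\to X$ is single-valued). Inverses of set-valued operators are graph inverses; $T_A$ and $T_{A^{-1}}$ are at most single-valued. *)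

From Stdlib Require Import Reals Lra.
Open Scope R_scope.
Set Implicit Arguments.

Record NormedSpace := {
  carrier :> Type;
  vzero : carrier;
  vadd : carrier -> carrier -> carrier;
  vopp : carrier -> carrier;
  vscal : R -> carrier -> carrier;
  norm : carrier -> R;
  vaddA : forall x y z, vadd x (vadd y z) = vadd (vadd x y) z;
  vaddC : forall x y, vadd x y = vadd y x;
  vadd0 : forall x, vadd x vzero = x;
  vaddN : forall x, vadd x (vopp x) = vzero;
  vscalA : forall a b x, vscal a (vscal b x) = vscal (a * b) x;
  vscal1 : forall x, vscal 1 x = x;
  vscalDv : forall a x y, vscal a (vadd x y) = vadd (vscal a x) (vscal a y);
  vscalDs : forall a b x, vscal (a + b) x = vadd (vscal a x) (vscal b x);
  norm_ge0 : forall x, 0 <= norm x;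
  norm_eq0 : forall x, norm x = 0 -> x = vzero;
  normZ : forall a x, norm (vscal a x) = Rabs a * norm x;
  normD : forall x y, norm (vadd x y) <= norm x + norm y
}.

Arguments vzero {n}.
Arguments vadd {n} _ _.
Arguments vopp {n} _.
Arguments vscal {n} _ _.
Arguments norm {n} _.
Definition vsub {X : NormedSpace} (x y : X) : X := vadd x (vopp y).

Definition complete (X : NormedSpace) : Prop :=
  forall u : nat -> X,
    (forall eps, 0 < eps -> exists N, forall m n, (N <= m)%nat -> (N <= n)%nat ->
        norm (vsub (u m) (u n)) < eps) ->
    exists l : X, forall eps, 0 < eps -> exists N, forall n, (N <= n)%nat ->
        norm (vsub (u n) l) < eps.

Record dual (X : NormedSpace) := {
  dfun :> X -> R;
  dadditive : forall x y, dfun (vadd x y) = dfun x + dfun y;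
  dhomog : forall a x, dfun (vscal a x) = a * dfun x;
  dbounded : exists C, forall x, Rabs (dfun x) <= C * norm x
}.

Definition pairing {X : NormedSpace} (x : X) (f : dual X) : R := f x.

Section DualOps.
Variable X : NormedSpace.

Definition dadd (f g : dual X) : dual X.
Proof.
  refine {| dfun := fun x => f x + g x |}.
  - intros x y; rewrite (dadditive f), (dadditive g); ring.
  - intros a x; rewrite (dhomog f), (dhomog g); ring.
  - destruct (dbounded f) as [C1 H1]; destruct (dbounded g) as [C2 H2].
    exists (C1 + C2); intro x.
    eapply Rle_trans; [apply Rabs_triang|].
    specialize (H1 x); specialize (H2 x); nra.
Defined.

Definition dscal (a : R) (f : dual X) : dual X.
Proof.
  refine {| dfun := fun x => a * f x |}.
  - intros x y; rewrite (dadditive f); ring.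
  - intros b x; rewrite (dhomog f); ring.
  - destruct (dbounded f) as [C H].
    exists (Rabs a * C); intro x.
    rewrite Rabs_mult. specialize (H x).
    assert (0 <= Rabs a) by apply Rabs_pos. nra.
Defined.

Definition dopp (f : dual X) : dual X := dscal (-1) f.
Definition dsub (f g : dual X) : dual X := dadd f (dopp g).
End DualOps.

(** Continuity of
    phi on X^* is written out: |phi f| <= C * M whenever M >= 0 bounds f,
    i.e. |phi f| <= C * ||f||_* . *)
Definition reflexive (X : NormedSpace) : Prop :=
  forall phi : dual X -> R,
    (forall f g, phi (dadd f g) = phi f + phi g) ->
    (forall a f, phi (dscal a f) = a * phi f) ->
    (exists C, forall (f : dual X) M, 0 <= M ->
        (forall x, Rabs (f x) <= M * norm x) -> Rabs (phi f) <= C * M) ->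
    exists x : X, forall f : dual X, phi f = f x.

Definition setop (U V : Type) := U -> V -> Prop.

Definition fgraph (U V : Type) (f : U -> V) : setop U V := fun u v => v = f u.
Definition op_inv (U V : Type) (A : setop U V) : setop V U := fun v u => A u v.
Definition op_add (U V : Type) (addV : V -> V -> V) (A B : setop U V) : setop U V :=
  fun u v => exists a b, A u a /\ B u b /\ v = addV a b.
Definition op_comp (U V W : Type) (A : setop V W) (B : setop U V) : setop U W :=
  fun u w => exists v, B u v /\ A v w.
Definition dom (U V : Type) (A : setop U V) : U -> Prop := fun u => exists v, A u v.
Definition ran (U V : Type) (A : setop U V) : V -> Prop := fun v => exists u, A u v.
Definition image (U V : Type) (f : U -> V) (S : U -> Prop) : V -> Prop :=
  fun v => exists u, S u /\ v = f u.

Definition monotone (X : NormedSpace) (A : setop X (dual X)) : Prop :=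
  forall x y xs ys, A x xs -> A y ys -> 0 <= pairing (vsub x y) (dsub xs ys).

Definition maximal_monotone (X : NormedSpace) (A : setop X (dual X)) : Prop :=
  monotone A /\
  forall x xs, (forall y ys, A y ys -> 0 <= pairing (vsub x y) (dsub xs ys)) -> A x xs.

Definition strictly_monotone (X : NormedSpace) (F : X -> dual X) : Prop :=
  forall x y, x <> y -> 0 < pairing (vsub x y) (dsub (F x) (F y)).

Definition three_star_monotone (X : NormedSpace) (F : X -> dual X) : Prop :=
  forall (x : X) (xs : dual X), exists M, forall y : X,
    pairing (vsub x y) (dsub (F y) xs) <= M.

Definition resolvent (X : NormedSpace) (F : X -> dual X) (A : setop X (dual X))
  : setop X X :=
  op_comp (op_inv (op_add (@dadd X) A (fgraph F))) (fgraph F).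

(** F^{-1}-resolvent of A^{-1} : X^* => X  :  (A^{-1} + F^{-1})^{-1} F^{-1},
    where G = F^{-1} *)
Definition inv_resolvent (X : NormedSpace) (G : dual X -> X) (A : setop X (dual X))
  : setop (dual X) (dual X) :=
  op_comp (op_inv (op_add (@vadd X) (op_inv A) (fgraph G))) (fgraph G).

From Stdlib Require Import Reals Lra FunctionalExtensionality ProofIrrelevance.
Open Scope R_scope.

(* Both resolvents are unfolded into explicit graph conditions:
   - y* = T_{A^{-1}} x*  iff  the pair (F^{-1}x* - F^{-1}y*, y* ) is in gra A;
   - w  = T_A x          iff  the pair (w, F x - F w) is in gra A.
   With these two characterisations the theorem is pure bookkeeping in X and
   X^* : the domain formula says that x* is in the domain exactly when F^{-1}x*
   is in ran(A^{-1} + F^{-1}), and for the equivalence one takes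
   w = F^{-1}x* - F^{-1}y*, so that F(F^{-1}x* - w) = y* and the F-resolvent
   condition at F^{-1}(y* + F w) reduces to (w, y* ) being in gra A.
   Only the bijectivity of F (with inverse G) is used. *)

Lemma dual_ext (X : NormedSpace) (f g : dual X) : (forall x, f x = g x) -> f = g.
Proof.
  destruct f as [f fa fh fb], g as [g ga gh gb]; simpl; intro Hfg.
  assert (f = g) by (apply functional_extensionality; exact Hfg).
  subst g; f_equal; apply proof_irrelevance.
Qed.

Lemma dadd_cancel_r (X : NormedSpace) (f g h : dual X) :
  dadd f h = dadd g h -> f = g.
Proof.
  intro Hsum; apply dual_ext; intro x.
  assert (Hx := f_equal (fun k : dual X => k x) Hsum); simpl in Hx; lra.
Qed.

Lemma vadd_eq_vsub (X : NormedSpace) (a b c : X) : vadd a b = c <-> a = vsub c b.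
Proof.
  unfold vsub; split; intro Heq.
  - rewrite <- Heq, <- vaddA, vaddN, vadd0; reflexivity.
  - subst a; rewrite <- vaddA, (vaddC _ (vopp b)), vaddN, vadd0; reflexivity.
Qed.

Lemma vsub_vsub (X : NormedSpace) (x y : X) : vsub x (vsub x y) = y.
Proof.
  symmetry; apply vadd_eq_vsub; rewrite vaddC; apply vadd_eq_vsub; reflexivity.
Qed.

Lemma inv_resolvent_graph (X : NormedSpace) (G : dual X -> X)
  (A : setop X (dual X)) (xs ys : dual X) :
  inv_resolvent G A xs ys <-> A (vsub (G xs) (G ys)) ys.
Proof.
  split.
  - intros [v [Hv [a [b [Ha [Hb Hsum]]]]]].
    unfold fgraph in Hv, Hb; subst v b.
    replace (vsub (G xs) (G ys)) with a; [exact Ha|].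
    apply vadd_eq_vsub; symmetry; exact Hsum.
  - intro Ha; exists (G xs); split; [reflexivity|].
    exists (vsub (G xs) (G ys)), (G ys); repeat split; [exact Ha|].
    symmetry; apply vadd_eq_vsub; reflexivity.
Qed.

Lemma resolvent_graph (X : NormedSpace) (F : X -> dual X)
  (A : setop X (dual X)) (x w : X) :
  resolvent F A x w <-> exists a, A w a /\ F x = dadd a (F w).
Proof.
  split.
  - intros [v [Hv [a [b [Ha [Hb Hsum]]]]]].
    unfold fgraph in Hv, Hb; subst v b; exists a; auto.
  - intros [a [Ha Hsum]]; exists (F x); split; [reflexivity|].
    exists a, (F w); repeat split; auto.
Qed.

Lemma dom_comp_fgraph (U V W : Type) (g : U -> V) (S : setop W V) (u : U) :
  dom (op_comp (op_inv S) (fgraph g)) u <-> ran S (g u).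
Proof.
  split.
  - intros [w [v [Hv HS]]]; unfold fgraph in Hv; subst v; exists w; exact HS.
  - intros [w HS]; exists w, (g u); split; [reflexivity | exact HS].
Qed.

Lemma image_bij (U V : Type) (f : U -> V) (g : V -> U)
  (Hfg : forall v, f (g v) = v) (Hgf : forall u, g (f u) = u)
  (P : U -> Prop) (v : V) :
  image f P v <-> P (g v).
Proof.
  split.
  - intros [u [Hu Hv]]; subst v; rewrite Hgf; exact Hu.
  - intro Hv; exists (g v); split; [exact Hv | symmetry; apply Hfg].
Qed.

Theorem theorem7p1
  (X : NormedSpace) (HXc : complete X) (HXr : reflexive X)
  (F : X -> dual X)
  (HFmax : maximal_monotone (fgraph F))
  (HFstr : strictly_monotone F)
  (HF3 : three_star_monotone F)
  (HFsurj : forall xs : dual X, exists x : X, F x = xs)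
  (G : dual X -> X)
  (HGr : forall xs : dual X, F (G xs) = xs)
  (HGl : forall x : X, G (F x) = x)
  (A : setop X (dual X)) (HA : monotone A) :
  (forall xs : dual X,
      dom (inv_resolvent G A) xs <->
      image F (ran (op_add (@vadd X) (op_inv A) (fgraph G))) xs)
  /\
  (forall xs : dual X, dom (inv_resolvent G A) xs ->
   forall ys : dual X,
     inv_resolvent G A xs ys <->
     exists w : X,
       resolvent F A (G (dadd ys (F (vsub (G xs) (G ys))))) w /\
       ys = F (vsub (G xs) w)).
Proof.
  split.
  - intro xs; unfold inv_resolvent.
    rewrite dom_comp_fgraph, (@image_bij _ _ F G HGr HGl); reflexivity.
  - intros xs _ ys; rewrite inv_resolvent_graph; split.
    +
      intro Hgraph; exists (vsub (G xs) (G ys)); split.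
      * apply resolvent_graph; exists ys; rewrite HGr; auto.
      * rewrite vsub_vsub, HGr; reflexivity.
    + intros [w [Hres Hys]].
      assert (Hw : w = vsub (G xs) (G ys)).
      { rewrite Hys, HGl, vsub_vsub; reflexivity. }
      subst w; apply resolvent_graph in Hres.
      destruct Hres as [a [Ha Hsum]]; rewrite HGr in Hsum.
      apply dadd_cancel_r in Hsum; subst a; exact Ha.
Qed.
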